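(* Each of the following collections of team model properties is forgetting: (1) the collection of all bisimulation invariant, non-empty, downward closed and union closed team properties; (2) the collection of all bisimulation invariant, non-empty, downward closed team properties; (3) the collection of all bisimulation invariant, non-empty, union closed team properties.
   Context: Fix a set $Prop$ of letters. Kripke models $M=(W,R,V)$, $V:W\to\mathcal P(Prop)$; team models $(M,X)$, $X\subseteq W$. A team (model) property is a class $\mathcal C$ of team models. For a set $\mathcal P$ of letters, $(M,w)\rightleftharpoons_{\mathcal P}(N,v)$: some relation containing $(w,v)$ has all pairs agreeing on letters of $\mathcal P$ and satisfying forth and back conditions for the accessibility relations; $(M,X)\rightleftharpoons_{\mathcal P}(N,Y)$: each $x\in X$ is $\mathcal P$-bisimilar to some $y\in Y$ and each $y\in Y$ to some $x\in X$. $\mathcal C$ is bisimulation invariant if $(M,X)\in\mathcal C$ and $(M,X)\rightleftharpoons_{Prop}(N,Y)$ imply $(N,Y)\in\mathcal C$; non-empty if $\mathcal C\neq\emptyset$; downward closed if $(M,X)\in\mathcal C$ and $Y\subseteq X$ imply $(M,Y)\in\mathcal C$; union closed if $(M,X_i)\in\mathcal C$ for all $i$ implies $(M,\bigcup_iX_i)\in\mathcal C$. For $Q\subseteq Prop$, $\mathcal C_{\sim Q}=\{(N,Y):\exists(M,X)\in\mathcal C,\ (N,Y)\rightleftharpoons_{Prop\setminus Q}(M,X)\}$. A collection $\mathcal T$ of team properties is forgetting if $\mathcal C_{\sim Q}\in\mathcal T$ for every $\mathcal C\in\mathcal T$ and every finite $Q\subseteq Prop$. *)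

From Stdlib Require Import List.

Section Defs.
Variable Letter : Type.

Record kmodel : Type := KModel {
  world : Type;
  acc : world -> world -> Prop;
  val : world -> Letter -> Prop
}.

Record teamModel : Type := TeamModel {
  tm_model : kmodel;
  tm_team : world tm_model -> Prop
}.

Definition teamProperty := teamModel -> Prop.

Definition bisim (P : Letter -> Prop) (M N : kmodel) (w : world M) (v : world N) : Prop :=
  exists Z : world M -> world N -> Prop,
    Z w v /\
    forall x y, Z x y ->
      (forall p, P p -> (val M x p <-> val N y p)) /\
      (forall x', acc M x x' -> exists y', acc N y y' /\ Z x' y') /\
      (forall y', acc N y y' -> exists x', acc M x x' /\ Z x' y').

Definition team_bisim (P : Letter -> Prop) (MX NY : teamModel) : Prop :=
  (forall x, tm_team MX x -> exists y, tm_team NY y /\ bisim P (tm_model MX) (tm_model NY) x y) /\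
  (forall y, tm_team NY y -> exists x, tm_team MX x /\ bisim P (tm_model MX) (tm_model NY) x y).

Definition allLetters : Letter -> Prop := fun _ => True.

Definition bisim_invariant (C : teamProperty) : Prop :=
  forall MX NY, C MX -> team_bisim allLetters MX NY -> C NY.

Definition nonempty_prop (C : teamProperty) : Prop := exists MX, C MX.

Definition downward_closed (C : teamProperty) : Prop :=
  forall (M : kmodel) (X Y : world M -> Prop),
    C (TeamModel M X) -> (forall w, Y w -> X w) -> C (TeamModel M Y).

Definition union_closed (C : teamProperty) : Prop :=
  forall (M : kmodel) (I : Type) (X : I -> world M -> Prop),
    (forall i, C (TeamModel M (X i))) ->
    C (TeamModel M (fun w => exists i, X i w)).

(* C_{~Q}, Q a finite set of letters given as a list *)
Definition forget (C : teamProperty) (Q : list Letter) : teamProperty :=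
  fun NY => exists MX, C MX /\ team_bisim (fun p => ~ In p Q) NY MX.

Definition forgetting (T : teamProperty -> Prop) : Prop :=
  forall C, T C -> forall Q : list Letter, T (forget C Q).

End Defs.

(* Bisimilarity with respect to a set of letters is an equivalence that only
   weakens when the set shrinks, so C_{~Q} is bisimulation invariant for any
   C, and non-empty whenever C is.  Downward closure: a subteam Y' of a
   team Y related to a witness (M, X) is related to the subteam of X of
   worlds bisimilar to some world of Y'.  Union closure: choose a witness
   (M_i, Y_i) for each X_i, move them all into the disjoint union of the
   models M_i, where they remain in C by bisimulation invariance, and take the
   union there. *)
From Stdlib Require Import List ClassicalEpsilon Eqdep.

Section Forgetting.
Variable Letter : Type.

Notation kmodel := (kmodel Letter).
Notation teamModel := (teamModel Letter).
Notation TeamModel := (TeamModel Letter).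
Notation world := (world Letter).
Notation acc := (acc Letter).
Notation val := (val Letter).
Notation tm_model := (tm_model Letter).
Notation tm_team := (tm_team Letter).
Notation bisim := (bisim Letter).
Notation team_bisim := (team_bisim Letter).
Notation forget := (forget Letter).

Lemma bisim_weaken (P P' : Letter -> Prop) M N w v :
  (forall p, P' p -> P p) -> bisim P M N w v -> bisim P' M N w v.
Proof.
  intros HP [Z [Zwv HZ]]. exists Z. split; [exact Zwv |].
  intros x y Zxy. destruct (HZ x y Zxy) as [Hval [Hforth Hback]].
  split; [intros p Hp; apply Hval, HP, Hp | auto].
Qed.

Lemma bisim_refl P M w : bisim P M M w w.
Proof.
  exists eq. split; [reflexivity |].
  intros x y <-. split; [tauto | split; intros x' H; exists x'; auto].
Qed.

Lemma bisim_sym P M N w v : bisim P M N w v -> bisim P N M v w.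
Proof.
  intros [Z [Zwv HZ]]. exists (fun y x => Z x y). split; [exact Zwv |].
  intros y x Zxy. destruct (HZ x y Zxy) as [Hval [Hforth Hback]].
  split; [intros p Hp; symmetry; apply Hval, Hp | auto].
Qed.

Lemma bisim_trans P M N K u v w :
  bisim P M N u v -> bisim P N K v w -> bisim P M K u w.
Proof.
  intros [Z1 [Z1uv HZ1]] [Z2 [Z2vw HZ2]].
  exists (fun x z => exists y, Z1 x y /\ Z2 y z). split; [eauto |].
  intros x z [y [Z1xy Z2yz]].
  destruct (HZ1 x y Z1xy) as [Hval1 [Hforth1 Hback1]].
  destruct (HZ2 y z Z2yz) as [Hval2 [Hforth2 Hback2]].
  split; [| split].
  - intros p Hp. rewrite Hval1, Hval2 by exact Hp. reflexivity.
  - intros x' Hx'. destruct (Hforth1 x' Hx') as [y' [Hy' Z1']].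
    destruct (Hforth2 y' Hy') as [z' [Hz' Z2']]. eauto.
  - intros z' Hz'. destruct (Hback2 z' Hz') as [y' [Hy' Z2']].
    destruct (Hback1 y' Hy') as [x' [Hx' Z1']]. eauto.
Qed.

Lemma team_bisim_weaken (P P' : Letter -> Prop) A B :
  (forall p, P' p -> P p) -> team_bisim P A B -> team_bisim P' A B.
Proof.
  intros HP [Hforth Hback]. split.
  - intros x Hx. destruct (Hforth x Hx) as [y [Hy Hxy]].
    exists y. split; [exact Hy | exact (bisim_weaken _ _ _ _ _ _ HP Hxy)].
  - intros y Hy. destruct (Hback y Hy) as [x [Hx Hxy]].
    exists x. split; [exact Hx | exact (bisim_weaken _ _ _ _ _ _ HP Hxy)].
Qed.

Lemma team_bisim_refl P A : team_bisim P A A.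
Proof. split; intros x Hx; exists x; split; auto; apply bisim_refl. Qed.

Lemma team_bisim_sym P A B : team_bisim P A B -> team_bisim P B A.
Proof.
  intros [Hforth Hback]. split.
  - intros y Hy. destruct (Hback y Hy) as [x [Hx Hxy]].
    exists x. split; [exact Hx | apply bisim_sym, Hxy].
  - intros x Hx. destruct (Hforth x Hx) as [y [Hy Hxy]].
    exists y. split; [exact Hy | apply bisim_sym, Hxy].
Qed.

Lemma team_bisim_trans P A B C :
  team_bisim P A B -> team_bisim P B C -> team_bisim P A C.
Proof.
  intros [HforthAB HbackAB] [HforthBC HbackBC]. split.
  - intros x Hx. destruct (HforthAB x Hx) as [y [Hy Hxy]].
    destruct (HforthBC y Hy) as [z [Hz Hyz]].
    exists z. split; [exact Hz | eapply bisim_trans; eauto].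
  - intros z Hz. destruct (HbackBC z Hz) as [y [Hy Hyz]].
    destruct (HbackAB y Hy) as [x [Hx Hxy]].
    exists x. split; [exact Hx | eapply bisim_trans; eauto].
Qed.

Lemma team_bisim_union P (M N : kmodel) (I : Type)
    (X : I -> world M -> Prop) (Y : I -> world N -> Prop) :
  (forall i, team_bisim P (TeamModel M (X i)) (TeamModel N (Y i))) ->
  team_bisim P (TeamModel M (fun w => exists i, X i w))
               (TeamModel N (fun v => exists i, Y i v)).
Proof.
  intros HXY. split.
  - intros x [i Hx]. destruct (proj1 (HXY i) x Hx) as [y [Hy Hxy]].
    exists y. split; [exists i; exact Hy | exact Hxy].
  - intros y [i Hy]. destruct (proj2 (HXY i) y Hy) as [x [Hx Hxy]].
    exists x. split; [exists i; exact Hx | exact Hxy].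
Qed.

Section DisjointUnion.
Variables (I : Type) (F : I -> teamModel).

Definition sum_model : kmodel :=
  KModel Letter {i : I & world (tm_model (F i))}
    (fun s t => exists i a b,
       s = existT _ i a /\ t = existT _ i b /\ acc (tm_model (F i)) a b)
    (fun s => val (tm_model (F (projT1 s))) (projT2 s)).

Definition sum_team (i : I) : world sum_model -> Prop :=
  fun s => exists a, s = existT _ i a /\ tm_team (F i) a.

Lemma bisim_sum_model i a :
  bisim (allLetters Letter) (tm_model (F i)) sum_model a (existT _ i a).
Proof.
  exists (fun a s => s = existT _ i a). split; [reflexivity |].
  intros x s ->. split; [| split].
  - intros p _. reflexivity.
  - intros x' Hx'. exists (existT _ i x'). split; [exists i, x, x'; auto | reflexivity].
  - intros t [j [a' [b [Hs [-> Hacc]]]]].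
    assert (i = j) as <- by exact (f_equal (@projT1 _ _) Hs).
    apply inj_pairT2 in Hs as <-. eauto.
Qed.

Lemma team_bisim_sum_team i :
  team_bisim (allLetters Letter) (F i) (TeamModel sum_model (sum_team i)).
Proof.
  split.
  - intros a Ha. exists (existT _ i a).
    split; [exists a; auto | apply bisim_sum_model].
  - intros s [a [-> Ha]]. exists a. split; [exact Ha | apply bisim_sum_model].
Qed.

End DisjointUnion.

Lemma allLetters_top (P : Letter -> Prop) p : P p -> allLetters Letter p.
Proof. intros _. exact I. Qed.

Lemma forget_bisim_invariant C Q : bisim_invariant Letter (forget C Q).
Proof.
  intros NY NY' [MX [HC HNM]] HNN'. exists MX. split; [exact HC |].
  eapply team_bisim_trans; [| exact HNM].
  apply team_bisim_sym. eapply team_bisim_weaken; [apply allLetters_top | exact HNN'].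
Qed.

Lemma forget_nonempty C Q :
  nonempty_prop Letter C -> nonempty_prop Letter (forget C Q).
Proof. intros [MX HC]. exists MX, MX. split; [exact HC | apply team_bisim_refl]. Qed.

Lemma forget_downward_closed C Q :
  downward_closed Letter C -> downward_closed Letter (forget C Q).
Proof.
  intros HC N Y Y' [[M X] [HMX [Hforth _]]] HY'.
  set (P := fun p => ~ In p Q).
  exists (TeamModel M (fun x => X x /\ exists y, Y' y /\ bisim P N M y x)).
  split; [| split].
  - apply (HC M X); [exact HMX | tauto].
  - intros y Hy. destruct (Hforth y (HY' y Hy)) as [x [Hx Hyx]].
    exists x. repeat split; eauto.
  - intros x [_ [y [Hy Hyx]]]. eauto.
Qed.

Lemma forget_union_closed C Q :
  bisim_invariant Letter C -> union_closed Letter C ->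
  union_closed Letter (forget C Q).
Proof.
  intros Hinv Hunion N I X HX.
  set (P := fun p => ~ In p Q).
  destruct (choice _ HX) as [F HF].
  assert (HXsum : forall i,
      team_bisim P (TeamModel N (X i)) (TeamModel (sum_model I F) (sum_team I F i))).
  { intro i. eapply team_bisim_trans; [apply HF |].
    eapply team_bisim_weaken; [apply allLetters_top | apply team_bisim_sum_team]. }
  assert (HCsum : forall i, C (TeamModel (sum_model I F) (sum_team I F i))).
  { intro i. eapply Hinv; [apply HF | apply team_bisim_sum_team]. }
  eexists. split; [apply Hunion, HCsum | apply team_bisim_union, HXsum].
Qed.

End Forgetting.

Theorem mainTheorem12 (Letter : Type) :
  forgetting Letter (fun C => bisim_invariant Letter C /\ nonempty_prop Letter C /\
                              downward_closed Letter C /\ union_closed Letter C) /\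
  forgetting Letter (fun C => bisim_invariant Letter C /\ nonempty_prop Letter C /\
                              downward_closed Letter C) /\
  forgetting Letter (fun C => bisim_invariant Letter C /\ nonempty_prop Letter C /\
                              union_closed Letter C).
Proof.
  split; [| split]; intros C HC Q.
  - destruct HC as (Hinv & Hne & Hdc & Huc).
    repeat split; auto using forget_bisim_invariant, forget_nonempty,
                             forget_downward_closed, forget_union_closed.
  - destruct HC as (_ & Hne & Hdc).
    repeat split; auto using forget_bisim_invariant, forget_nonempty,
                             forget_downward_closed.
  - destruct HC as (Hinv & Hne & Huc).
    repeat split; auto using forget_bisim_invariant, forget_nonempty,
                             forget_union_closed.
Qed.
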